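(* Let $p=(p_0,\dots,p_{m-1})\in\{0,1\}^m$, $m\ge1$, and let $\tilde c_\infty[p]$ be the limit of the reverse CQCA evolution started from the $v_p$-periodic initial configuration $\tilde c_0[p]$. Then every cell $(x,0)$ with $x\le0$ has a defined sum bit $b_{-x}$ in $\tilde c_\infty[p]$, and the 2-adic integer $\sum_{j\ge0}b_j2^j\in\mathbb{Z}_2$ equals $Q^{-1}(p^\infty)$, the Collatz cyclic number associated to $p$.
   Context: $\mathbb{Z}_2$ is the ring of 2-adic integers. The Collatz map extends to $T:\mathbb{Z}_2\to\mathbb{Z}_2$, $T(z)=z/2$ if $z\equiv0\pmod2$ and $T(z)=(3z+1)/2$ otherwise. $Q:\mathbb{Z}_2\to\{0,1\}^{\mathbb{N}}$, $Q(z)=(T^i(z)\bmod2)_{i\ge0}$, is a bijection (known fact). $p^\infty$ denotes the infinite periodic sequence $pp p\cdots$; $Q^{-1}(p^\infty)$ is the Collatz cyclic number associated to $p$. Notation: $E=(1,0)$, $W=(-1,0)$, $N=(0,1)$, $S=(0,-1)$; $[P]\in\{0,1\}$ equals $1$ iff $P$ holds. States: $\Sigma=\{0,1,\bot\}^2\setminus\{(\bot,0),(\bot,1)\}$, $(s,c)$ with sum bit $s$ and carry bit $c$; undefined if $(\bot,\bot)$, half-defined if $s\in\{0,1\},c=\bot$, defined if $s,c\in\{0,1\}$. The reverse CQCA: one step $F(C)$ of $C:\mathbb{Z}^2\to\Sigma$ first applies the non-local rule giving $C'$: $C'(u)=(0,1)$ if $C(u+W)=(1,\bot)$, $C(u)\in\{(0,\bot),(\bot,\bot)\}$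 and $C(u+iE)\in\{(0,\bot),(\bot,\bot)\}$ for all $i\ge1$; otherwise $C'(u)=C(u)$. Then the local rule on $C'$ at all cells simultaneously: (i) if $C'(u)=(s,\bot)$ half-defined and $C'(u+E)=(s',c')$ defined, $F(C)(u)=(s,[s+s'+c'\ge2])$; (ii) if $C'(u)=(\bot,\bot)$, $C'(u+E)=(s',c')$ is defined and $C'(u+S)$ has sum bit $s''\in\{0,1\}$, then $F(C)(u)=(t,[t+s'+c'\ge2])$ with $t=(s''+s'+c')\bmod2$; (iii) otherwise $F(C)(u)=C'(u)$. Cyclic world: let $k$ be the number of $1$s in $p$ and $v_p=(-m,-k)$. Positions $u_0=(0,0)$, $u_{i+1}=u_i+W$ if $p_i=0$ and $u_{i+1}=u_i+W+S$ if $p_i=1$ (so $u_m=u_0+v_p$). The configuration $\tilde c_0[p]$ is defined by $\tilde c_0[p](u_i+tv_p)=(p_i,\bot)$ for $0\le i<m$, $t\in\mathbb{Z}$, and $(\bot,\bot)$ at all other cells; it is invariant under translation by $v_p$ (equivalently it lives on $\mathbb{Z}^2$ modulo $v_p$), and this invariance is preserved by $F$. Each cell's state in $F^i(\tilde c_0[p])$ is eventually constant; $\tilde c_\infty[p]$ is the pointwise limit. *)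

From Stdlib Require Import ZArith List Arith Bool ClassicalEpsilon.
Import ListNotations.
Open Scope Z_scope.

(** * Cell states  Sigma = {0,1,bot}^2 \ {(bot,0),(bot,1)} *)
Inductive state : Type :=
| Undef : state                      (* (bot, bot) *)
| Half  : bool -> state              (* (s, bot)   *)
| Def   : bool -> bool -> state.     (* (s, c)     *)

Definition sumbit (s : state) : option bool :=
  match s with Undef => None | Half b => Some b | Def b _ => Some b end.

Definition cell := (Z * Z)%type.
Definition config := cell -> state.

Definition addc (u v : cell) : cell := (fst u + fst v, snd u + snd v).
Definition dirE : cell := (1, 0).
Definition dirW : cell := (-1, 0).
Definition dirN : cell := (0, 1).
Definition dirS : cell := (0, -1).
Definition scalec (t : Z) (v : cell) : cell := (t * fst v, t * snd v).

Definition maj (a b c : bool) : bool := (a && b) || (a && c) || (b && c).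

Definition zeroish (s : state) : Prop := s = Half false \/ s = Undef.

(** the non-local rule (its condition quantifies over infinitely many cells,
    hence classical decision) *)
Definition nonlocal_cond (C : config) (u : cell) : Prop :=
  C (addc u dirW) = Half true /\ zeroish (C u) /\
  (forall i : Z, 1 <= i -> zeroish (C (addc u (scalec i dirE)))).

Definition nonlocal_rule (C : config) : config := fun u =>
  if excluded_middle_informative (nonlocal_cond C u) then Def false true else C u.

Definition local_rule (C' : config) : config := fun u =>
  match C' u, C' (addc u dirE) with
  | Half s, Def s' c' => Def s (maj s s' c')
  | Undef, Def s' c' =>
      match sumbit (C' (addc u dirS)) with
      | Some s'' => let t := xorb s'' (xorb s' c') in Def t (maj t s' c')
      | None => Undef
      end
  | x, _ => x
  end.

Definition F (C : config) : config := local_rule (nonlocal_rule C).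

Definition pbit (p : list bool) (i : nat) : bool := nth i p false.
Definition ones (l : list bool) : nat := length (filter (fun b => b) l).
Definition kpref (p : list bool) (i : nat) : nat := ones (firstn i p).

Definition upos (p : list bool) (i : nat) : cell :=
  (- Z.of_nat i, - Z.of_nat (kpref p i)).
Definition vp (p : list bool) : cell :=
  (- Z.of_nat (length p), - Z.of_nat (ones p)).

(** c~_0[p]: (p_i, bot) at u_i + t v_p (0 <= i < m, t in Z), (bot,bot) elsewhere.
    Since 0 <= i < m, the pair (i,t) is determined by the x-coordinate:
    -x = i + t m, i.e. i = (-x) mod m, t = (-x) div m. *)
Definition c0 (p : list bool) : config := fun u =>
  let m := Z.of_nat (length p) in
  let i := Z.to_nat ((- fst u) mod m) in
  let t := (- fst u) / m in
  let w := addc (upos p i) (scalec t (vp p)) in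
  if (Z.eqb (fst u) (fst w) && Z.eqb (snd u) (snd w))%bool then Half (pbit p i) else Undef.

Definition cfg (p : list bool) (n : nat) : config := Nat.iter n F (c0 p).

(** * 2-adic integers, modelled by their binary digit sequences:
      z = sum_{j>=0} z_j 2^j  corresponds to  (fun j => z_j). *)
Definition Z2 := nat -> bool.

Fixpoint trunc (n : nat) (z : Z2) : nat :=
  match n with
  | O => 0%nat
  | S n' => (trunc n' z + (if z n' then 2 ^ n' else 0))%nat
  end.

Definition Tnat (n : nat) : nat :=
  if Nat.even n then (n / 2)%nat else ((3 * n + 1) / 2)%nat.

(** Collatz map T on Z_2: since T(z) mod 2^(k+1) only depends on z mod 2^(k+2)
    and agrees with Tnat (z mod 2^(k+2)) mod 2^(k+1), digit k of T(z) is
    digit k of Tnat (z mod 2^(k+2)). *)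
Definition T (z : Z2) : Z2 := fun k => Nat.testbit (Tnat (trunc (k + 2) z)) k.

Definition Q (z : Z2) : nat -> bool := fun i => Nat.iter i T z 0%nat.

Definition pinf (p : list bool) : nat -> bool := fun i => pbit p (i mod length p).

From Stdlib Require Import ZArith List Arith Lia Bool Wf_nat.
From Stdlib Require Import Classical ClassicalEpsilon FunctionalExtensionality.

(* Under F a defined cell never changes and a half-defined cell keeps its sum
   bit, so every cell changes at most once and has a limit.  Call row i the
   cells of c~_0[p] at height -k_i lying on u_i or west of it.  If p_i = 0 the
   staircase continues west in the same row, so row i+1 is row i with its first
   digit removed: it holds z/2.  If p_i = 1 the non-local rule plants the carry
   (0,1) at u_i + E, and every cell west of u_i acts as a full adder for
   z + 2z + 1, its east neighbour supplying 2z with the carry and its south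
   neighbour (row i+1) the digit of the result: row i+1 holds (3z+1)/2.  Hence
   row i holds T^i(z) for z = row 0, and its first digit is the sum bit p_i of
   u_i. *)

Lemma trunc_succ n z : trunc (S n) z = (trunc n z + Nat.b2n (z n) * 2 ^ n)%nat.
Proof. simpl. destruct (z n); simpl; lia. Qed.

Lemma trunc_lt n z : (trunc n z < 2 ^ n)%nat.
Proof. induction n as [|n IH]; simpl; [lia|]. destruct (z n); lia. Qed.

Lemma testbit_add_high a n x j :
  (a < 2 ^ n)%nat -> (j < n)%nat -> Nat.testbit (a + 2 ^ n * x) j = Nat.testbit a j.
Proof.
  intros Ha Hj. rewrite <- (Nat.mod_pow2_bits_low _ n j Hj).
  rewrite Nat.mul_comm, Nat.Div0.mod_add, Nat.mod_small by exact Ha. reflexivity.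
Qed.

Lemma testbit_add_top a n b :
  (a < 2 ^ n)%nat -> Nat.testbit (a + 2 ^ n * Nat.b2n b) n = b.
Proof.
  intros Ha. rewrite Nat.testbit_eqb, Nat.mul_comm, Nat.div_add by (apply Nat.pow_nonzero; lia).
  rewrite Nat.div_small by exact Ha. destruct b; reflexivity.
Qed.

Lemma testbit_trunc n z j : (j < n)%nat -> Nat.testbit (trunc n z) j = z j.
Proof.
  induction n as [|n IH]; intro Hj; [lia|]. rewrite trunc_succ, Nat.mul_comm.
  destruct (Nat.eq_dec j n) as [->|Hne].
  - apply testbit_add_top, trunc_lt.
  - rewrite testbit_add_high by (apply trunc_lt || lia). apply IH. lia.
Qed.

Lemma even_trunc n z : Nat.even (trunc (S n) z) = negb (z 0%nat).
Proof. rewrite <- Nat.negb_odd, <- Nat.bit0_odd, testbit_trunc by lia. reflexivity. Qed.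

Lemma T_even z k : z 0%nat = false -> T z k = z (S k).
Proof.
  intro Hz. unfold T, Tnat. rewrite Nat.add_comm. simpl (2 + k)%nat.
  rewrite even_trunc, Hz. simpl negb. cbv iota.
  rewrite Nat.div2_bits. apply testbit_trunc. lia.
Qed.

(* The digits of 3z+1 = z + 2z + 1, where [cc d] is the carry out of digit [d]. *)
Definition triple_succ_digits (z cc : Z2) : Z2 := fun d =>
  match d with O => false | S d' => xorb (z d) (xorb (z d') (cc d')) end.

Section TripleSucc.
Variables z cc : Z2.
Hypothesis z0 : z 0%nat = true.
Hypothesis cc0 : cc 0%nat = true.
Hypothesis cc_succ : forall d, cc (S d) = maj (z (S d)) (z d) (cc d).

Lemma trunc_triple_succ n :
  (3 * trunc (S n) z + 1 = trunc (S n) (triple_succ_digits z cc)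
     + 2 ^ S n * (Nat.b2n (cc n) + Nat.b2n (z n)))%nat.
Proof.
  induction n as [|n IH].
  - simpl. rewrite z0, cc0. reflexivity.
  - rewrite (trunc_succ (S n) z), (trunc_succ (S n) (triple_succ_digits z cc)).
    rewrite (Nat.pow_succ_r' 2 (S n)).
    assert (Hdigit : (Nat.b2n (cc n) + Nat.b2n (z n) + 3 * Nat.b2n (z (S n)) =
       Nat.b2n (triple_succ_digits z cc (S n)) + 2 * Nat.b2n (cc (S n))
         + 2 * Nat.b2n (z (S n)))%nat).
    { simpl triple_succ_digits. rewrite cc_succ. destruct (z (S n)), (z n), (cc n); reflexivity. }
    nia.
Qed.

Lemma T_odd k : T z k = xorb (z (S k)) (xorb (z k) (cc k)).
Proof.
  unfold T, Tnat. rewrite Nat.add_comm. simpl (2 + k)%nat.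
  rewrite even_trunc, z0. simpl negb. cbv iota.
  rewrite Nat.div2_bits, trunc_triple_succ, testbit_add_high by (apply trunc_lt || lia).
  apply testbit_trunc. lia.
Qed.

End TripleSucc.

Definition isDef (s : state) : Prop := match s with Def _ _ => True | _ => False end.

(* The only changes F can make to a cell. *)
Definition refines (s s' : state) : Prop :=
  match s with
  | Undef => s' = Undef \/ isDef s'
  | Half b => s' = Half b \/ exists cb, s' = Def b cb
  | Def b cb => s' = Def b cb
  end.

Lemma refines_refl s : refines s s.
Proof. destruct s; simpl; auto. Qed.

Lemma refines_trans s1 s2 s3 : refines s1 s2 -> refines s2 s3 -> refines s1 s3.
Proof.
  destruct s1, s2, s3; simpl; intros H12 H23;
    repeat match goal with
    | H : _ \/ _ |- _ => destruct H
    | H : exists _, _ |- _ => destruct H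
    end; try discriminate; try tauto;
    repeat match goal with
    | H : Half _ = _ |- _ => injection H as ->
    | H : Def _ _ = _ |- _ => injection H as -> ->
    end; eauto.
Qed.

Lemma refines_sumbit s s' b : refines s s' -> sumbit s = Some b -> sumbit s' = Some b.
Proof.
  destruct s, s'; simpl; intros H E; try destruct H as [H|[? H]]; congruence.
Qed.

Lemma refines_nondef s s' : refines s s' -> ~ isDef s' -> s' = s.
Proof. destruct s, s'; simpl; intros H N; try destruct H as [H|[? H]]; tauto || congruence. Qed.

Lemma isDef_sumbit s : isDef s -> exists b, sumbit s = Some b.
Proof. destruct s; simpl; [tauto|tauto|eauto]. Qed.

Lemma nonlocal_rule_cases C u :
  nonlocal_rule C u = C u \/ (zeroish (C u) /\ nonlocal_rule C u = Def false true).
Proof.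
  unfold nonlocal_rule. destruct (excluded_middle_informative _) as [[_ [Hz _]]|_]; auto.
Qed.

Lemma nonlocal_rule_fires C u : nonlocal_cond C u -> nonlocal_rule C u = Def false true.
Proof. unfold nonlocal_rule. destruct (excluded_middle_informative _); tauto. Qed.

Lemma nonlocal_rule_idle C u : ~ nonlocal_cond C u -> nonlocal_rule C u = C u.
Proof. unfold nonlocal_rule. destruct (excluded_middle_informative _); tauto. Qed.

Lemma nonlocal_rule_refines C u : refines (C u) (nonlocal_rule C u).
Proof.
  destruct (nonlocal_rule_cases C u) as [-> | [[-> | ->] ->]]; simpl; eauto using refines_refl.
Qed.

Lemma local_rule_refines C u : refines (C u) (local_rule C u).
Proof.
  unfold local_rule. destruct (C u), (C (addc u dirE)); simpl; eauto.
  destruct (sumbit _); simpl; auto.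
Qed.

Lemma F_refines C u : refines (C u) (F C u).
Proof. exact (refines_trans _ _ _ (nonlocal_rule_refines C u) (local_rule_refines _ u)). Qed.

Lemma local_rule_def C u b cb : C u = Def b cb -> local_rule C u = Def b cb.
Proof. intro H. pose proof (local_rule_refines C u) as R. rewrite H in R. exact R. Qed.

Lemma F_def_of_east C u b :
  sumbit (C u) = Some b -> isDef (C (addc u dirE)) -> isDef (F C u).
Proof.
  intros Hu HE. destruct (C (addc u dirE)) as [| |s' c'] eqn:EE; try contradiction.
  pose proof (nonlocal_rule_refines C (addc u dirE)) as RE. rewrite EE in RE.
  pose proof (refines_sumbit _ _ _ (nonlocal_rule_refines C u) Hu) as Hu'.
  unfold F, local_rule. rewrite RE.
  destruct (nonlocal_rule C u); simpl in *; [discriminate|exact I|exact I].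
Qed.

Lemma F_def_of_east_south C u s'' :
  isDef (C (addc u dirE)) -> sumbit (C (addc u dirS)) = Some s'' -> isDef (F C u).
Proof.
  intros HE HS. destruct (C (addc u dirE)) as [| |s' c'] eqn:EE; try contradiction.
  pose proof (nonlocal_rule_refines C (addc u dirE)) as RE. rewrite EE in RE.
  unfold F, local_rule. rewrite RE.
  rewrite (refines_sumbit _ _ _ (nonlocal_rule_refines C (addc u dirS)) HS).
  destruct (nonlocal_rule C u); exact I.
Qed.

Lemma F_becomes_def C u t cc :
  ~ isDef (C u) -> ~ nonlocal_cond C u -> F C u = Def t cc ->
  exists s' c', F C (addc u dirE) = Def s' c' /\ cc = maj t s' c' /\
    (C u = Half t \/ C u = Undef /\
       exists s'', sumbit (F C (addc u dirS)) = Some s'' /\ t = xorb s'' (xorb s' c')).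
Proof.
  intros HD HN HF. unfold F at 1, local_rule in HF. rewrite (nonlocal_rule_idle C u HN) in HF.
  revert HF. destruct (nonlocal_rule C (addc u dirE)) as [| |s' c'] eqn:EE;
    destruct (C u) as [|s|s c0]; simpl in HD; try contradiction; try discriminate.
  - destruct (sumbit (nonlocal_rule C (addc u dirS))) as [s''|] eqn:ES; [|discriminate].
    intro HF. injection HF as <- <-. exists s', c'.
    split; [unfold F; apply local_rule_def, EE|]. split; [reflexivity|].
    right. split; [reflexivity|]. exists s''. split; [|reflexivity].
    exact (refines_sumbit _ _ _ (local_rule_refines _ _) ES).
  - intro HF. injection HF as <- <-. exists s', c'.
    split; [unfold F; apply local_rule_def, EE|]. auto.
Qed.

Definition evolve (c : config) (n : nat) : config := Nat.iter n F c.

Section Evolution.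
Variable c : config.

Lemma evolve_refines n n' u : (n <= n')%nat -> refines (evolve c n u) (evolve c n' u).
Proof.
  induction 1 as [|n' _ IH]; [apply refines_refl|].
  exact (refines_trans _ _ _ IH (F_refines (evolve c n') u)).
Qed.

Lemma refines_evolve n u : refines (c u) (evolve c n u).
Proof. exact (evolve_refines 0 n u (Nat.le_0_l n)). Qed.

Lemma eventually_constant u : exists s N, forall n, (N <= n)%nat -> evolve c n u = s.
Proof.
  destruct (classic (exists N, isDef (evolve c N u))) as [[N HN]|Hnone].
  - exists (evolve c N u), N. intros n Hn. pose proof (evolve_refines N n u Hn) as R.
    destruct (evolve c N u); simpl in *; tauto.
  - exists (c u), 0%nat. intros n _.
    apply (refines_nondef _ _ (refines_evolve n u)). eauto.
Qed.

Definition limit (u : cell) : state :=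
  proj1_sig (constructive_indefinite_description _ (eventually_constant u)).

Lemma limit_spec u : exists N, forall n, (N <= n)%nat -> evolve c n u = limit u.
Proof. unfold limit. destruct (constructive_indefinite_description _ _) as [s Hs]. exact Hs. Qed.

Lemma evolve_refines_limit n u : refines (evolve c n u) (limit u).
Proof.
  destruct (limit_spec u) as [N HN]. rewrite <- (HN (max n N)) by lia.
  apply evolve_refines. lia.
Qed.

Lemma limit_of_def n u b cb : evolve c n u = Def b cb -> limit u = Def b cb.
Proof. intro H. pose proof (evolve_refines_limit n u) as R. rewrite H in R. exact R. Qed.

Lemma limit_isDef n u : isDef (evolve c n u) -> isDef (limit u).
Proof.
  destruct (evolve c n u) eqn:E; simpl; try tauto.
  intros _. rewrite (limit_of_def n u _ _ E). exact I.
Qed.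

Lemma limit_sumbit u b : sumbit (c u) = Some b -> sumbit (limit u) = Some b.
Proof. exact (refines_sumbit _ _ _ (evolve_refines_limit 0 u)). Qed.

Lemma evolve_sumbit n u b : sumbit (c u) = Some b -> sumbit (evolve c n u) = Some b.
Proof. exact (refines_sumbit _ _ _ (refines_evolve n u)). Qed.

Lemma limit_reached2 u v : exists N, evolve c N u = limit u /\ evolve c N v = limit v.
Proof.
  destruct (limit_spec u) as [N1 H1], (limit_spec v) as [N2 H2].
  exists (max N1 N2). split; [apply H1|apply H2]; lia.
Qed.

Lemma first_def_time u : ~ isDef (c u) -> isDef (limit u) ->
  exists n, evolve c n u = c u /\ isDef (evolve c (S n) u).
Proof.
  intros H0 HL. destruct (limit_spec u) as [N HN].
  assert (HD : isDef (evolve c N u)) by (rewrite HN by lia; exact HL). clear HN HL.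
  induction N as [|N IH]; [contradiction|].
  destruct (classic (isDef (evolve c N u))) as [HN|HN]; [exact (IH HN)|].
  exists N. split; [|exact HD]. exact (refines_nondef _ _ (refines_evolve N u) HN).
Qed.

Lemma limit_def_of_east u b :
  sumbit (c u) = Some b -> isDef (limit (addc u dirE)) -> isDef (limit u).
Proof.
  intros Hu HE. destruct (limit_spec (addc u dirE)) as [N HN].
  apply (limit_isDef (S N)), (F_def_of_east (evolve c N) u b).
  - exact (evolve_sumbit N u b Hu).
  - rewrite HN by lia. exact HE.
Qed.

Lemma limit_def_of_east_south u s'' :
  isDef (limit (addc u dirE)) -> sumbit (limit (addc u dirS)) = Some s'' ->
  isDef (limit u).
Proof.
  intros HE HS. destruct (limit_reached2 (addc u dirE) (addc u dirS)) as [N [EN SN]].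
  apply (limit_isDef (S N)), (F_def_of_east_south (evolve c N) u s'').
  - rewrite EN. exact HE.
  - rewrite SN. exact HS.
Qed.

Lemma limit_becomes_def u t cc :
  ~ isDef (c u) -> (forall n, ~ nonlocal_cond (evolve c n) u) -> limit u = Def t cc ->
  exists s' c', limit (addc u dirE) = Def s' c' /\ cc = maj t s' c' /\
    (c u = Half t \/ c u = Undef /\
       exists s'', sumbit (limit (addc u dirS)) = Some s'' /\ t = xorb s'' (xorb s' c')).
Proof.
  intros H0 HN HL.
  destruct (first_def_time u H0) as [n [Hn HS]]; [rewrite HL; exact I|].
  destruct (evolve c (S n) u) as [| |t' cc'] eqn:ES; try contradiction.
  rewrite (limit_of_def (S n) u t' cc' ES) in HL. injection HL as -> ->.
  destruct (F_becomes_def (evolve c n) u t cc) as [s' [c' [HE [Hcc Hcase]]]];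
    [rewrite Hn; exact H0|exact (HN n)|exact ES|].
  rewrite Hn in Hcase. exists s', c'.
  split; [exact (limit_of_def (S n) _ _ _ HE)|]. split; [exact Hcc|].
  destruct Hcase as [Hh|[Hu [s'' [HSs'' Ht]]]]; [now left|right].
  split; [exact Hu|]. exists s''. split; [|exact Ht].
  exact (refines_sumbit _ _ _ (evolve_refines_limit (S n) _) HSs'').
Qed.

Lemma no_nonlocal_of_west u :
  c (addc u dirW) <> Half true -> forall n, ~ nonlocal_cond (evolve c n) u.
Proof.
  intros H n [HW _]. apply H. rewrite <- HW. symmetry.
  apply (refines_nondef _ _ (refines_evolve n _)). rewrite HW. simpl. tauto.
Qed.

Lemma no_nonlocal_of_true u :
  sumbit (c u) = Some true -> forall n, ~ nonlocal_cond (evolve c n) u.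
Proof.
  intros H n [_ [Hz _]]. pose proof (evolve_sumbit n u true H) as E.
  destruct Hz as [Z|Z]; rewrite Z in E; discriminate.
Qed.

End Evolution.

Local Open Scope Z_scope.

Lemma addc_dirE x y : addc (x, y) dirE = (x + 1, y).
Proof. unfold addc, dirE. simpl. f_equal; ring. Qed.

Lemma addc_dirW x y : addc (x, y) dirW = (x - 1, y).
Proof. unfold addc, dirW. simpl. f_equal; ring. Qed.

Lemma addc_dirS x y : addc (x, y) dirS = (x, y - 1).
Proof. unfold addc, dirS. simpl. f_equal; ring. Qed.

(* [K j] is the depth k_j of u_j = (-j, -k_j) and [pb j] the bit p_j. *)
Definition staircase_step (K : Z -> Z) (pb : Z -> bool) : Prop :=
  forall j, K (j + 1) = K j + (if pb j then 1 else 0).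

Definition on_staircase (c : config) (K : Z -> Z) (pb : Z -> bool) : Prop :=
  forall j y, c (- j, y) = if y =? - K j then Half (pb j) else Undef.

Definition sbit (s : state) : bool := match sumbit s with Some b => b | None => false end.
Definition cbit (s : state) : bool := match s with Def _ cb => cb | _ => false end.

Lemma sbit_of_sumbit s b : sumbit s = Some b -> sbit s = b.
Proof. unfold sbit. intros ->. reflexivity. Qed.

Section Staircase.
Variables (c : config) (K : Z -> Z) (pb : Z -> bool).
Hypothesis K_step : staircase_step K pb.
Hypothesis c_on : on_staircase c K pb.

Lemma K_mono a b : a <= b -> K a <= K b.
Proof.
  intros Hab. replace b with (a + Z.of_nat (Z.to_nat (b - a))) by lia.
  induction (Z.to_nat (b - a)) as [|n IH]; [rewrite Z.add_0_r; lia|].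
  rewrite Nat2Z.inj_succ, <- Z.add_1_r, Z.add_assoc, K_step. destruct (pb _); lia.
Qed.

Lemma K_succ_true i : pb i = true -> K (i + 1) = K i + 1.
Proof. intro Hp. rewrite K_step, Hp. reflexivity. Qed.

Lemma K_lt_of_true i j : pb i = true -> i < j -> K i < K j.
Proof. intros Hp Hij. pose proof (K_mono (i + 1) j). rewrite K_succ_true in * by exact Hp. lia. Qed.

Lemma staircase_cover a b k : K a <= k < K b ->
  exists i, a <= i < b /\ K i = k /\ pb i = true.
Proof.
  intros Hk. assert (Hab : a <= b) by (destruct (Z.le_gt_cases a b); [lia|]; pose proof (K_mono b a); lia).
  replace b with (a + Z.of_nat (Z.to_nat (b - a))) in * by lia.
  induction (Z.to_nat (b - a)) as [|n IH]; [rewrite Z.add_0_r in Hk; lia|].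
  rewrite Nat2Z.inj_succ, <- Z.add_1_r, Z.add_assoc, K_step in Hk.
  destruct (Z_lt_le_dec k (K (a + Z.of_nat n))) as [Hlt|Hge].
  - destruct IH as [i [Hi Hrest]]; [lia|lia|]. exists i. split; [lia|exact Hrest].
  - exists (a + Z.of_nat n). destruct (pb _); [|lia]. repeat split; lia.
Qed.

Lemma c_path j : c (- j, - K j) = Half (pb j).
Proof. rewrite c_on, Z.eqb_refl. reflexivity. Qed.

Lemma c_west_of_true i j : pb i = true -> i < j -> c (- j, - K i) = Undef.
Proof.
  intros Hp Hij. rewrite c_on. pose proof (K_lt_of_true i j Hp Hij).
  destruct (Z.eqb_spec (- K i) (- K j)); [lia|reflexivity].
Qed.

Lemma c_east_zeroish i j : j < i -> zeroish (c (- j, - K i)).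
Proof.
  intros Hji. rewrite c_on. destruct (Z.eqb_spec (- K i) (- K j)) as [E|_]; [left|right; reflexivity].
  destruct (pb j) eqn:Hp; [|reflexivity].
  pose proof (K_lt_of_true j i Hp Hji). lia.
Qed.

Lemma nonlocal_cond_at_true i : pb i = true -> nonlocal_cond c (- (i - 1), - K i).
Proof.
  intro Hp. split; [|split].
  - rewrite addc_dirW. replace (- (i - 1) - 1) with (- i) by ring. rewrite c_path, Hp. reflexivity.
  - apply c_east_zeroish. lia.
  - intros r Hr. unfold addc, scalec, dirE. simpl.
    replace (- (i - 1) + r * 1) with (- (i - 1 - r)) by ring.
    replace (- K i + r * 0) with (- K i) by ring.
    apply c_east_zeroish. lia.
Qed.

Lemma limit_east_of_true i : pb i = true -> limit c (- (i - 1), - K i) = Def false true.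
Proof.
  intro Hp. apply (limit_of_def c 1). simpl. unfold F.
  apply local_rule_def, nonlocal_rule_fires, nonlocal_cond_at_true, Hp.
Qed.

Lemma limit_sumbit_between a j k :
  (forall i, a <= i < j -> pb i = true -> K i = k -> isDef (limit c (- j, - k))) ->
  K a <= k <= K j -> exists b, sumbit (limit c (- j, - k)) = Some b.
Proof.
  intros Hdef Hk. destruct (Z.eq_dec k (K j)) as [->|Hne].
  - exists (pb j). apply limit_sumbit. rewrite c_path. reflexivity.
  - destruct (staircase_cover a j k) as [i [Hi [HKi Hp]]]; [lia|].
    apply isDef_sumbit, (Hdef i Hi Hp HKi).
Qed.

Lemma limit_def_west_of_true (d : nat) i :
  pb i = true -> isDef (limit c (- (i + Z.of_nat d), - K i)).
Proof.
  revert i. induction d as [d IH] using lt_wf_ind. intros i Hp. destruct d as [|d].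
  - rewrite Z.add_0_r. apply (limit_def_of_east c _ (pb i)); [rewrite c_path; reflexivity|].
    rewrite addc_dirE. replace (- i + 1) with (- (i - 1)) by ring.
    rewrite limit_east_of_true by exact Hp. exact I.
  - set (j := i + Z.of_nat (S d)).
    destruct (limit_sumbit_between (i + 1) j (K i + 1)) as [b Hb].
    + intros i' Hi' Hp' HKi'.
      replace j with (i' + Z.of_nat (Z.to_nat (j - i'))) by lia.
      rewrite <- HKi'. apply IH; [|exact Hp'].
      assert (i < i') by (pose proof (K_mono i' i); lia). lia.
    + rewrite K_succ_true by exact Hp.
      pose proof (K_lt_of_true i j Hp ltac:(lia)). lia.
    + apply (limit_def_of_east_south c _ b).
      * rewrite addc_dirE. replace (- j + 1) with (- (i + Z.of_nat d)) by lia.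
        apply IH; [lia|exact Hp].
      * rewrite addc_dirS. replace (- K i - 1) with (- (K i + 1)) by ring. exact Hb.
Qed.

Lemma limit_sumbit_below a j k :
  K a <= k <= K j -> exists b, sumbit (limit c (- j, - k)) = Some b.
Proof.
  apply (limit_sumbit_between a). intros i Hi Hp <-.
  replace j with (i + Z.of_nat (Z.to_nat (j - i))) by lia.
  exact (limit_def_west_of_true _ i Hp).
Qed.

(* Row [i], read westwards from u_i, as a 2-adic integer. *)
Definition row (i : Z) : Z2 := fun d => sbit (limit c (- (i + Z.of_nat d), - K i)).
Definition carry (i : Z) : Z2 := fun d => cbit (limit c (- (i + Z.of_nat d), - K i)).

Lemma row_first i : row i 0%nat = pb i.
Proof.
  unfold row. rewrite Z.add_0_r. apply sbit_of_sumbit, limit_sumbit.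
  rewrite c_path. reflexivity.
Qed.

Lemma row_limit i d : pb i = true ->
  limit c (- (i + Z.of_nat d), - K i) = Def (row i d) (carry i d).
Proof.
  intro Hp. unfold row, carry, sbit, cbit.
  destruct (limit c _) eqn:E; [| |reflexivity];
    pose proof (limit_def_west_of_true d i Hp) as HD; rewrite E in HD; contradiction.
Qed.

Lemma row_shift i d : pb i = false -> row (i + 1) d = row i (S d).
Proof.
  intro Hp. unfold row. rewrite K_step, Hp, Z.add_0_r.
  replace (i + 1 + Z.of_nat d) with (i + Z.of_nat (S d)) by lia. reflexivity.
Qed.

Lemma carry_first i : pb i = true -> carry i 0%nat = true.
Proof.
  intro Hp. set (u := (- i, - K i)).
  assert (Hu : c u = Half true) by (unfold u; rewrite c_path, Hp; reflexivity).
  assert (HL := row_limit i 0%nat Hp). rewrite Z.add_0_r in HL.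
  destruct (limit_becomes_def c u (row i 0%nat) (carry i 0%nat)) as [s' [c' [HE [Hcc _]]]];
    [rewrite Hu; simpl; tauto|apply no_nonlocal_of_true; rewrite Hu; reflexivity|exact HL|].
  unfold u in HE. rewrite addc_dirE in HE. replace (- i + 1) with (- (i - 1)) in HE by ring.
  rewrite limit_east_of_true in HE by exact Hp. injection HE as <- <-.
  rewrite Hcc, row_first, Hp. reflexivity.
Qed.

Lemma row_adder i d : pb i = true ->
  carry i (S d) = maj (row i (S d)) (row i d) (carry i d) /\
  row (i + 1) d = xorb (row i (S d)) (xorb (row i d) (carry i d)).
Proof.
  intro Hp. set (u := (- (i + Z.of_nat (S d)), - K i)).
  assert (Hu : c u = Undef) by (apply c_west_of_true; [exact Hp|lia]).
  assert (HW : c (addc u dirW) <> Half true).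
  { unfold u. rewrite addc_dirW.
    replace (- (i + Z.of_nat (S d)) - 1) with (- (i + Z.of_nat (S d) + 1)) by ring.
    rewrite c_west_of_true by (exact Hp || lia). discriminate. }
  destruct (limit_becomes_def c u (row i (S d)) (carry i (S d)))
    as [s' [c' [HE [Hcc [Hh|[_ [s'' [HS Ht]]]]]]]];
    [rewrite Hu; simpl; tauto|exact (no_nonlocal_of_west c u HW)|exact (row_limit i (S d) Hp)
    |rewrite Hu in Hh; discriminate|].
  unfold u in HE, HS. rewrite addc_dirE in HE. rewrite addc_dirS in HS.
  replace (- (i + Z.of_nat (S d)) + 1) with (- (i + Z.of_nat d)) in HE by lia.
  rewrite row_limit in HE by exact Hp. injection HE as <- <-.
  replace (- (i + Z.of_nat (S d))) with (- (i + 1 + Z.of_nat d)) in HS by lia.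
  replace (- K i - 1) with (- K (i + 1)) in HS by (rewrite K_succ_true by exact Hp; ring).
  split; [exact Hcc|]. unfold row at 1. rewrite (sbit_of_sumbit _ _ HS), Ht.
  destruct s'', (row i d), (carry i d); reflexivity.
Qed.

Lemma T_row i : T (row i) = row (i + 1).
Proof.
  apply functional_extensionality. intro k. destruct (pb i) eqn:Hp.
  - rewrite (T_odd (row i) (carry i)); [|rewrite row_first; exact Hp|exact (carry_first i Hp)
      |intro d; exact (proj1 (row_adder i d Hp))].
    symmetry. exact (proj2 (row_adder i k Hp)).
  - rewrite T_even by (rewrite row_first; exact Hp). symmetry. exact (row_shift i k Hp).
Qed.

Lemma Q_row_zero (n : nat) : Q (row 0) n = pb (Z.of_nat n).
Proof.
  assert (Hiter : Nat.iter n T (row 0) = row (Z.of_nat n)).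
  { induction n as [|n IH]; [reflexivity|].
    simpl Nat.iter. rewrite IH, T_row, Nat2Z.inj_succ, Z.add_1_r. reflexivity. }
  unfold Q. rewrite Hiter. apply row_first.
Qed.

Lemma row_zero_limit (j : nat) : K 0 = 0 ->
  sumbit (limit c (- Z.of_nat j, 0)) = Some (row 0 j).
Proof.
  intro K0. destruct (limit_sumbit_below 0 (Z.of_nat j) 0) as [b Hb].
  - rewrite K0. split; [lia|]. rewrite <- K0. apply K_mono. lia.
  - unfold row. rewrite K0, Z.add_0_l. rewrite (sbit_of_sumbit _ _ Hb). exact Hb.
Qed.

End Staircase.

Lemma kpref_succ p i : kpref p (S i) = (kpref p i + if pbit p i then 1 else 0)%nat.
Proof.
  unfold kpref, ones, pbit. revert i. induction p as [|a p IH]; intro i.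
  - destruct i; reflexivity.
  - destruct i as [|i]; [destruct a; reflexivity|].
    change (firstn (S (S i)) (a :: p)) with (a :: firstn (S i) p).
    change (firstn (S i) (a :: p)) with (a :: firstn i p).
    change (nth (S i) (a :: p) false) with (nth i p false).
    specialize (IH i). destruct a; cbn [filter length]; lia.
Qed.

Lemma kpref_length p : kpref p (length p) = ones p.
Proof. unfold kpref. rewrite firstn_all. reflexivity. Qed.

Definition pbZ (p : list bool) (j : Z) : bool := pbit p (Z.to_nat (j mod Z.of_nat (length p))).

(* The depth of u_j = u_{j mod m} + (j div m) v_p. *)
Definition KZ (p : list bool) (j : Z) : Z :=
  Z.of_nat (kpref p (Z.to_nat (j mod Z.of_nat (length p))))
  + j / Z.of_nat (length p) * Z.of_nat (ones p).

Section CyclicConfiguration.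
Variable p : list bool.
Hypothesis p_nonempty : (1 <= length p)%nat.

Lemma KZ_step : staircase_step (KZ p) (pbZ p).
Proof.
  intro j. unfold KZ, pbZ. set (m := Z.of_nat (length p)).
  assert (Hm : 0 < m) by (unfold m; lia).
  pose proof (Z.mod_pos_bound j m Hm) as Hr. pose proof (Z.div_mod j m ltac:(lia)) as Hd.
  set (r := j mod m) in *. set (q := j / m) in *.
  destruct (Z.eq_dec (r + 1) m) as [Er|Er].
  - replace (j + 1) with (0 + (q + 1) * m) by lia.
    rewrite Z.mod_add, Z.div_add, Z.mod_0_l, Z.div_0_l by lia.
    pose proof (kpref_succ p (length p - 1)) as HS.
    replace (S (length p - 1)) with (length p) in HS by lia. rewrite kpref_length in HS.
    replace (Z.to_nat r) with (length p - 1)%nat by (unfold m in Er; lia).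
    destruct (pbit p (length p - 1)); simpl; lia.
  - replace (j + 1) with (r + 1 + q * m) by lia.
    rewrite Z.mod_add, Z.div_add, Z.mod_small, Z.div_small by lia.
    replace (Z.to_nat (r + 1)) with (S (Z.to_nat r)) by lia. rewrite kpref_succ.
    destruct (pbit p (Z.to_nat r)); lia.
Qed.

Lemma c0_on_staircase : on_staircase (c0 p) (KZ p) (pbZ p).
Proof.
  intros j y. unfold c0, KZ, pbZ. cbv zeta.
  unfold addc, upos, scalec, vp. cbn [fst snd]. rewrite Z.opp_involutive.
  set (m := Z.of_nat (length p)).
  assert (Hm : 0 < m) by (unfold m; lia).
  pose proof (Z.mod_pos_bound j m Hm) as Hr. pose proof (Z.div_mod j m ltac:(lia)) as Hd.
  set (r := j mod m) in *. set (q := j / m) in *.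
  replace (- j =? - Z.of_nat (Z.to_nat r) + q * - m) with true
    by (symmetry; apply Z.eqb_eq; lia).
  replace (- Z.of_nat (kpref p (Z.to_nat r)) + q * - Z.of_nat (ones p))
    with (- (Z.of_nat (kpref p (Z.to_nat r)) + q * Z.of_nat (ones p))) by ring.
  reflexivity.
Qed.

Lemma KZ_zero : KZ p 0 = 0.
Proof. unfold KZ. rewrite Z.mod_0_l, Z.div_0_l by lia. reflexivity. Qed.

Lemma pbZ_pinf (n : nat) : pbZ p (Z.of_nat n) = pinf p n.
Proof. unfold pinf, pbZ. rewrite <- Nat2Z.inj_mod, Nat2Z.id. reflexivity. Qed.

End CyclicConfiguration.

Theorem mainTheorem12 (p : list bool) (Hm : (1 <= length p)%nat) :
  exists b : nat -> bool,
    (forall j : nat,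
       exists s : state,
         (exists N : nat, forall n : nat, (N <= n)%nat ->
            cfg p n ((- Z.of_nat j)%Z, 0%Z) = s) /\
         sumbit s = Some (b j)) /\
    Q b = pinf p.
Proof.
  pose proof (KZ_step p Hm) as HK. pose proof (c0_on_staircase p Hm) as Hc.
  exists (row (c0 p) (KZ p) 0). split.
  - intro j. exists (limit (c0 p) (- Z.of_nat j, 0)). split.
    + exact (limit_spec (c0 p) _).
    + exact (row_zero_limit _ _ _ HK Hc j (KZ_zero p Hm)).
  - apply functional_extensionality. intro n.
    rewrite (Q_row_zero _ _ _ HK Hc). apply pbZ_pinf.
Qed.
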